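(* Let $f\in H^2(\mathbb{D})$. Then $|\langle f,e_{n,a}\rangle|\to 0$ as $n\to\infty$, uniformly in $a\in\mathbb{D}$; that is, for every $\varepsilon>0$ there is $N$ such that $|\langle f,e_{n,a}\rangle|<\varepsilon$ for all $n>N$ and all $a\in\mathbb{D}$.
   Context: $\mathbb{D}$ is the open unit disc; $H^2(\mathbb{D})$ the Hardy space with inner product $\langle f,g\rangle=\frac{1}{2\pi}\int_0^{2\pi}f(e^{it})\overline{g(e^{it})}\,dt$. For $n\in\mathbb{N}$ and $a\in\mathbb{D}$, $k_{n,a}(z)=\left(\frac{\partial}{\partial\overline{a}}\right)^n\frac{1}{1-\overline{a}z}=\frac{n!\,z^n}{(1-\overline{a}z)^{n+1}}$ and $e_{n,a}=k_{n,a}/\|k_{n,a}\|$. *)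

From Stdlib Require Import Reals ClassicalEpsilon Factorial.
From Coquelicot Require Import Coquelicot.
Open Scope R_scope.

Definition cis (t : R) : C := (cos t, sin t).

Definition holo_disc (f : C -> C) : Prop :=
  exists c : nat -> C, forall z : C, Cmod z < 1 ->
    is_series (fun n => (c n * z ^ n)%C) (f z).

Definition CRInt (F : R -> C) (a b : R) : C :=
  (RInt (fun t => fst (F t)) a b, RInt (fun t => snd (F t)) a b).

Definition H2 (f : C -> C) : Prop :=
  holo_disc f /\
  exists M : R, forall r : R, 0 <= r < 1 ->
    / (2 * PI) * RInt (fun t => (Cmod (f (RtoC r * cis t)%C)) ^ 2) 0 (2 * PI) <= M.

Definition inner_r (f g : C -> C) (r : R) : C :=
  (RtoC (/ (2 * PI)) *
   CRInt (fun t => f (RtoC r * cis t)%C * Cconj (g (RtoC r * cis t)%C))%C 0 (2 * PI))%C.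

(* <f,g> = (1/2pi) int_0^{2pi} f(e^{it}) conj(g(e^{it})) dt, boundary values
   being radial limits: the limit of inner_r f g r as r -> 1^- *)
Definition hinner (f g : C -> C) : C :=
  epsilon (inhabits (RtoC 0))
    (fun l : C => filterlim (inner_r f g) (at_left 1) (locally l)).

Definition hnorm (f : C -> C) : R := sqrt (fst (hinner f f)).

Definition k_na (n : nat) (a : C) (z : C) : C :=
  (RtoC (INR (fact n)) * z ^ n / (1 - Cconj a * z) ^ (S n))%C.

Definition e_na (n : nat) (a : C) (z : C) : C :=
  (k_na n a z / RtoC (hnorm (k_na n a)))%C.

(* Write [f = sum c_m z^m] and [g = sum d_m z^m] on the disc.  On a circle of
   radius [r < 1] the partial sums converge uniformly, and the orthogonality of
   the [e^(imt)] gives Parseval's formula: the mean of [f conj(g)] over that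
   circle is [sum c_m conj(d_m) r^(2m)].  When [sum |c_m| |d_m| < oo], an Abelian
   argument lets [r -> 1], so [<f, g> = sum c_m conj(d_m)]; for [f] in [H^2] the
   bounded integral means give [sum |c_m|^2 < oo].  Expanding
   [(1 - conj(a) z)^-(n+1)] as a binomial series, the coefficients of [k_{n,a}]
   vanish below degree [n], are square-summable, and the one of degree [n] is
   [n! >= 1]; so those of [e_{n,a}] form a unit vector supported in [[n, oo)].
   By Cauchy-Schwarz, [|<f, e_{n,a}>|] is at most the tail
   [(sum_(m >= n) |c_m|^2)^(1/2)], which does not depend on [a] and tends to 0. *)

From Stdlib Require Import Reals Lra Lia ClassicalEpsilon Factorial.
From Coquelicot Require Import Coquelicot.
Open Scope R_scope.

(* Coquelicot states [sum_n] identities at its structures on [C]; retyping the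
   equality at [C] lets [ring] and [field] apply. *)
Ltac Ceq := match goal with |- @eq _ ?x ?y => change (@eq C x y) end.

Lemma sum_n_SC (a : nat -> C) n : sum_n a (S n) = (sum_n a n + a (S n))%C.
Proof. rewrite sum_Sn. reflexivity. Qed.

Lemma sum_n_OC (a : nat -> C) : sum_n a O = a O.
Proof. apply sum_O. Qed.

Lemma sum_n_Cmult_l (K : C) u N : @eq C (sum_n (fun j => K * u j)%C N) (K * sum_n u N)%C.
Proof. induction N; rewrite ?sum_n_OC, ?sum_n_SC, ?IHN; ring. Qed.

Lemma sum_n_Cminus (a b : nat -> C) M :
  @eq C (sum_n (fun m => a m - b m)%C M) (sum_n a M - sum_n b M)%C.
Proof. induction M; rewrite ?sum_n_OC, ?sum_n_SC, ?IHM; ring. Qed.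

Lemma fst_sum_n (a : nat -> C) N : fst (sum_n a N) = sum_f_R0 (fun j => fst (a j)) N.
Proof.
  induction N.
  - rewrite sum_n_OC. reflexivity.
  - rewrite sum_n_SC. simpl. rewrite <- IHN. reflexivity.
Qed.

Lemma Cmod_sum_n (a : nat -> C) M : Cmod (sum_n a M) <= sum_f_R0 (fun m => Cmod (a m)) M.
Proof.
  induction M; rewrite ?sum_n_OC, ?sum_n_SC; simpl; [lra|].
  eapply Rle_trans; [apply Cmod_triangle | lra].
Qed.

Lemma Cmod_RtoC_nonneg x : 0 <= x -> Cmod (RtoC x) = x.
Proof. intros. rewrite Cmod_R. apply Rabs_pos_eq; auto. Qed.

Lemma Cconj_RtoC x : Cconj (RtoC x) = RtoC x.
Proof. apply injective_projections; simpl; ring. Qed.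

Lemma Cmod_sub_triangle (a b c : C) : Cmod (a - c) <= Cmod (a - b) + Cmod (b - c).
Proof. replace (a - c)%C with ((a - b) + (b - c))%C by ring. apply Cmod_triangle. Qed.

Lemma Cmod_sub_sym (a b : C) : Cmod (a - b) = Cmod (b - a).
Proof. replace (a - b)%C with (- (b - a))%C by ring. apply Cmod_opp. Qed.

Definition Clim (u : nat -> C) (l : C) : Prop :=
  forall eps, 0 < eps -> exists N, forall n, (N <= n)%nat -> Cmod (u n - l) < eps.

Lemma filterlim_Clim (u : nat -> C) l :
  filterlim u eventually (locally (T := C_UniformSpace) l) -> Clim u l.
Proof.
  intros H eps Heps.
  assert (Heps2 : 0 < eps / 2) by lra.
  destruct (proj1 (filterlim_locally (U := C_UniformSpace) u l) H (mkposreal _ Heps2)) as [N HN].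
  exists N. intros n Hn.
  pose proof (norm_compat2 (V := C_NormedModule) l (u n) (mkposreal _ Heps2) (HN n Hn)) as Hn'.
  simpl in Hn'. change (norm_factor (V := C_NormedModule)) with (sqrt 2) in Hn'.
  assert (sqrt 2 < 2) by (rewrite <- (sqrt_square 2) at 2 by lra; apply sqrt_lt_1; lra).
  change (Cmod (u n - l) < eps). eapply Rlt_le_trans; [exact Hn' | nra].
Qed.

Lemma is_series_Clim (a : nat -> C) l : is_series a l -> Clim (sum_n a) l.
Proof. apply filterlim_Clim. Qed.

Lemma Clim_ext u v l : (forall n, u n = v n) -> Clim u l -> Clim v l.
Proof.
  intros E Hu eps Heps. destruct (Hu eps Heps) as [N HN].
  exists N. intros n Hn. rewrite <- E. auto.
Qed.

Lemma Clim_shift (u : nat -> C) n l : Clim (fun N => u (n + N)%nat) l -> Clim u l.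
Proof.
  intros H eps Heps. destruct (H eps Heps) as [N HN]. exists (n + N)%nat. intros m Hm.
  replace m with (n + (m - n))%nat by lia. apply HN. lia.
Qed.

Lemma Clim_le (u : nat -> C) l x B :
  Clim u l -> (exists N, forall n, (N <= n)%nat -> Cmod (u n - x) <= B) ->
  Cmod (l - x) <= B.
Proof.
  intros Hu [N HN]. apply Rnot_gt_le; intro Hc.
  destruct (Hu (Cmod (l - x) - B)) as [M HM]; [lra|].
  specialize (HM (max N M) ltac:(lia)). specialize (HN (max N M) ltac:(lia)).
  pose proof (Cmod_sub_triangle l (u (max N M)) x). rewrite Cmod_sub_sym in HM. lra.
Qed.

Lemma Clim_Cmod_le (u : nat -> C) l B :
  Clim u l -> (exists N, forall n, (N <= n)%nat -> Cmod (u n) <= B) -> Cmod l <= B.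
Proof.
  intros Hu [N HN]. replace l with (l - 0)%C by ring. apply (Clim_le u); auto.
  exists N. intros n Hn. replace (u n - 0)%C with (u n) by ring. auto.
Qed.

Lemma Clim_plus u v l k : Clim u l -> Clim v k -> Clim (fun n => u n + v n)%C (l + k)%C.
Proof.
  intros Hu Hv eps Heps.
  destruct (Hu (eps / 2)) as [N1 H1]; [lra|]. destruct (Hv (eps / 2)) as [N2 H2]; [lra|].
  exists (max N1 N2). intros n Hn.
  replace (u n + v n - (l + k))%C with ((u n - l) + (v n - k))%C by ring.
  specialize (H1 n ltac:(lia)). specialize (H2 n ltac:(lia)).
  pose proof (Cmod_triangle (u n - l) (v n - k)). lra.
Qed.

Lemma Clim_scal K u l : Clim u l -> Clim (fun n => K * u n)%C (K * l)%C.
Proof.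
  intros Hu eps Heps. pose proof (Cmod_ge_0 K).
  destruct (Hu (eps / (Cmod K + 1))) as [N HN].
  { apply Rdiv_lt_0_compat; lra. }
  exists N. intros n Hn. specialize (HN n Hn).
  replace (K * u n - K * l)%C with (K * (u n - l))%C by ring.
  rewrite Cmod_mult. pose proof (Cmod_ge_0 (u n - l)).
  apply Rmult_lt_compat_l with (r := Cmod K + 1) in HN; [|lra].
  replace ((Cmod K + 1) * (eps / (Cmod K + 1))) with eps in HN by (field; lra).
  nra.
Qed.

Lemma Clim_minus u v l k : Clim u l -> Clim v k -> Clim (fun n => u n - v n)%C (l - k)%C.
Proof.
  intros Hu Hv. apply Clim_plus; auto.
  apply (Clim_ext (fun n => (-1) * v n)%C); [intros; ring|].
  replace (- k)%C with ((-1) * k)%C by ring. apply Clim_scal; auto.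
Qed.

Lemma Clim_fst u l : Clim u l -> Un_cv (fun n => fst (u n)) (fst l).
Proof.
  intros H eps Heps. destruct (H eps Heps) as [N HN]. exists N. intros n Hn.
  unfold R_dist. eapply Rle_lt_trans; [|apply (HN n); lia].
  eapply Rle_trans; [|apply Rmax_Cmod]. simpl. apply Rmax_l.
Qed.

Lemma Clim_0_of_geom_bound (u : nat -> C) K q :
  0 <= q < 1 -> (forall N, Cmod (u N) <= K * q ^ N) -> Clim u 0.
Proof.
  intros Hq Hu eps Heps.
  destruct (pow_lt_1_zero q) with (y := eps / (Rabs K + 1)) as [N HN].
  { rewrite Rabs_pos_eq; lra. }
  { apply Rdiv_lt_0_compat; auto. pose proof (Rabs_pos K). lra. }
  exists N. intros n Hn. specialize (HN n Hn). specialize (Hu n).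
  rewrite Rabs_pos_eq in HN by (apply pow_le; lra).
  replace (u n - 0)%C with (u n) by ring.
  pose proof (Rabs_pos K). pose proof (Rle_abs K). pose proof (pow_le q n (proj1 Hq)).
  apply Rmult_lt_compat_l with (r := Rabs K + 1) in HN; [|lra].
  replace ((Rabs K + 1) * (eps / (Rabs K + 1))) with eps in HN by (field; lra).
  nra.
Qed.

Lemma sum_f_R0_le_mono (g : nat -> R) M M' :
  (forall j, 0 <= g j) -> (M <= M')%nat -> sum_f_R0 g M <= sum_f_R0 g M'.
Proof. intros Hg H. induction H; [lra|]. simpl. pose proof (Hg (S m)). lra. Qed.

Lemma term_le_sum_f_R0 (g : nat -> R) j M :
  (forall j, 0 <= g j) -> (j <= M)%nat -> g j <= sum_f_R0 g M.
Proof.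
  intros Hg H. eapply Rle_trans; [|apply (sum_f_R0_le_mono g j M Hg H)].
  destruct j; simpl; [lra|]. pose proof (cond_pos_sum g j Hg). lra.
Qed.

Lemma sum_f_R0_scal_l (k : R) (g : nat -> R) M :
  sum_f_R0 (fun m => k * g m) M = k * sum_f_R0 g M.
Proof. rewrite scal_sum. apply sum_eq. intros; ring. Qed.

Lemma sum_f_R0_tail (a : nat -> R) K M :
  sum_f_R0 (fun m => if (K <? m)%nat then a m else 0) M
  = sum_f_R0 a (max M K) - sum_f_R0 a K.
Proof.
  induction M.
  - simpl. destruct (Nat.ltb_spec K 0); [lia|]. replace (max 0 K) with K by lia. ring.
  - rewrite tech5, IHM. destruct (Nat.ltb_spec K (S M)).
    + replace (max (S M) K) with (S M) by lia. replace (max M K) with M by lia.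
      rewrite tech5. ring.
    + replace (max (S M) K) with K by lia. replace (max M K) with K by lia. ring.
Qed.

Lemma nonneg_series_cv (a : nat -> R) B :
  (forall j, 0 <= a j) -> (forall N, sum_f_R0 a N <= B) ->
  exists L, Un_cv (sum_f_R0 a) L /\ (forall N, sum_f_R0 a N <= L).
Proof.
  intros Ha HB.
  assert (Hg : Un_growing (sum_f_R0 a)) by (intros n; simpl; pose proof (Ha (S n)); lra).
  destruct (growing_cv (sum_f_R0 a) Hg) as [L HL].
  { exists B. intros x [i ->]. apply HB. }
  exists L. split; auto. apply growing_ineq; auto.
Qed.

Lemma nonneg_series_tail_small (a : nat -> R) B :
  (forall j, 0 <= a j) -> (forall N, sum_f_R0 a N <= B) ->
  forall eps, 0 < eps -> exists N0, forall K M, (N0 <= K)%nat ->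
    sum_f_R0 (fun m => if (K <? m)%nat then a m else 0) M <= eps.
Proof.
  intros Ha HB eps Heps.
  destruct (nonneg_series_cv a B Ha HB) as [L [HL HLe]].
  destruct (HL eps Heps) as [N0 HN0]. exists N0. intros K M HK.
  specialize (HN0 K HK). unfold R_dist in HN0.
  rewrite Rabs_minus_sym, Rabs_pos_eq in HN0 by (pose proof (HLe K); lra).
  rewrite sum_f_R0_tail. pose proof (HLe (max M K)). lra.
Qed.

Lemma sum_f_R0_le_of_Clim (a : nat -> R) (L : C) :
  (forall j, 0 <= a j) -> Clim (sum_n (fun j => RtoC (a j))) L ->
  forall N, sum_f_R0 a N <= fst L.
Proof.
  intros Ha HL. apply Clim_fst in HL. apply growing_ineq.
  - intros n. simpl. pose proof (Ha (S n)). lra.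
  - intros eps Heps. destruct (HL eps Heps) as [N HN]. exists N. intros n Hn.
    rewrite (sum_eq a (fun j => fst (RtoC (a j)))) by reflexivity.
    rewrite <- fst_sum_n. apply HN; auto.
Qed.

Lemma geom_sum_le q N : 0 <= q < 1 -> sum_f_R0 (fun i => q ^ i) N <= / (1 - q).
Proof.
  intros Hq. rewrite tech3 by lra. unfold Rdiv.
  pattern (/ (1 - q)) at 2; rewrite <- Rmult_1_l. apply Rmult_le_compat_r.
  - apply Rlt_le, Rinv_0_lt_compat; lra.
  - pose proof (pow_le q (S N) (proj1 Hq)). lra.
Qed.

Lemma pow_le_1 (x : R) n : 0 <= x <= 1 -> x ^ n <= 1.
Proof. intros Hx. rewrite <- (pow1 n). apply pow_incr. lra. Qed.

Lemma pow_le_pow_le_1 (x : R) m n : 0 <= x <= 1 -> (m <= n)%nat -> x ^ n <= x ^ m.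
Proof.
  intros Hx H. replace n with (m + (n - m))%nat by lia. rewrite pow_add.
  pose proof (pow_le x m (proj1 Hx)). pose proof (pow_le_1 x (n - m) Hx).
  pose proof (pow_le x (n - m) (proj1 Hx)). nra.
Qed.

Lemma one_sub_pow_le r k : 0 <= r <= 1 -> 1 - r ^ k <= INR k * (1 - r).
Proof.
  intros Hr. induction k; [simpl; lra|].
  rewrite S_INR. simpl pow. pose proof (pos_INR k). pose proof (pow_le_1 r k Hr). nra.
Qed.

Lemma le_of_forall_pow_mul_le (P M : R) k :
  0 <= P -> (forall r, 0 <= r < 1 -> r ^ k * P <= M) -> P <= M.
Proof.
  intros HP H. apply Rnot_gt_le. intro Hc.
  set (K := INR k * P + 1).
  assert (HK : 0 < K) by (unfold K; pose proof (pos_INR k); nra).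
  set (dl := Rmin (1/2) ((P - M) / (2 * K))).
  assert (Hd1 : dl <= 1/2) by apply Rmin_l.
  assert (Hd2 : dl <= (P - M) / (2 * K)) by apply Rmin_r.
  assert (Hd0 : 0 < dl) by (apply Rmin_pos; [lra | apply Rdiv_lt_0_compat; lra]).
  specialize (H (1 - dl) ltac:(lra)).
  pose proof (one_sub_pow_le (1 - dl) k ltac:(lra)) as Hb.
  assert (H2 : INR k * dl * P <= K * dl) by (unfold K; pose proof (pos_INR k); nra).
  assert (H3 : K * dl <= (P - M) / 2).
  { replace ((P - M) / 2) with (K * ((P - M) / (2 * K))) by (field; lra).
    apply Rmult_le_compat_l; lra. }
  nra.
Qed.

(* For [p >= 1], [nbinom p j = (p - 1 + j choose j)] is the coefficient of [w ^ j]
   in [(1 - w) ^ (-p)]: dividing a power series by [1 - w] replaces its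
   coefficients by their partial sums. *)
Fixpoint nbinom (p j : nat) : R :=
  match p with
  | O => match j with O => 1 | S _ => 0 end
  | S p' => sum_f_R0 (nbinom p') j
  end.

Lemma nbinom_nonneg p j : 0 <= nbinom p j.
Proof.
  revert j; induction p; intros j; simpl.
  - destruct j; lra.
  - apply cond_pos_sum; auto.
Qed.

Lemma nbinom_0 p : nbinom p 0 = 1.
Proof. induction p; auto. Qed.

Lemma sqrt_pow_bound (s : R) (j N : nat) :
  0 <= s <= 1 -> (j <= N)%nat -> s ^ N <= sqrt s ^ j * sqrt s ^ N.
Proof.
  intros Hs HjN.
  assert (Hq : 0 <= sqrt s <= 1).
  { split; [apply sqrt_pos|]. rewrite <- sqrt_1. apply sqrt_le_1_alt. lra. }
  replace (s ^ N) with (sqrt s ^ (j + N) * sqrt s ^ (N - j)).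
  - rewrite pow_add. pose proof (pow_le_1 _ (N - j) Hq).
    assert (0 <= sqrt s ^ j * sqrt s ^ N) by (apply Rmult_le_pos; apply pow_le; lra).
    pose proof (pow_le (sqrt s) (N - j) (proj1 Hq)). nra.
  - rewrite <- pow_add. replace (j + N + (N - j))%nat with (N * 2)%nat by lia.
    rewrite Nat.mul_comm, pow_mult, pow2_sqrt by lra. reflexivity.
Qed.

Lemma Cminus_1_neq_0 (w : C) : Cmod w < 1 -> (1 - w)%C <> 0%C.
Proof.
  intros Hw E.
  assert (Ew : w = RtoC 1) by (replace w with (1 - (1 - w))%C by ring; rewrite E; ring).
  rewrite Ew, Cmod_1 in Hw. lra.
Qed.

Lemma one_sub_mul_partial_sums (beta : nat -> R) (w : C) N :
  ((1 - w) * sum_n (fun j => RtoC (sum_f_R0 beta j) * w ^ j) N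
   = sum_n (fun j => RtoC (beta j) * w ^ j) N - RtoC (sum_f_R0 beta N) * w ^ S N)%C.
Proof.
  induction N.
  - rewrite !sum_n_OC. simpl. ring.
  - rewrite !sum_n_SC, tech5, RtoC_plus.
    set (X := sum_n (fun j => RtoC (sum_f_R0 beta j) * w ^ j)%C N) in *.
    set (Y := sum_n (fun j => RtoC (beta j) * w ^ j)%C N) in *.
    replace Y with ((1 - w) * X + RtoC (sum_f_R0 beta N) * w ^ S N)%C by (rewrite IHN; ring).
    change (w ^ S (S N))%C with (w * w ^ S N)%C. ring.
Qed.

(* The error term [B_N w^(N+1)], with [B_N] the partial sums of [beta], is
   at most [K q^N] for [q = sqrt |w|], since [|w|^N <= q^j q^N] for [j <= N]. *)
Lemma Clim_partial_sums_series (beta : nat -> R) (w L : C) K :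
  Cmod w < 1 -> (forall j, 0 <= beta j) ->
  (forall N, sum_f_R0 (fun j => beta j * sqrt (Cmod w) ^ j) N <= K) ->
  Clim (sum_n (fun j => RtoC (beta j) * w ^ j)%C) L ->
  Clim (sum_n (fun j => RtoC (sum_f_R0 beta j) * w ^ j)%C) (/ (1 - w) * L)%C.
Proof.
  intros Hw Hb HK HL.
  set (s := Cmod w). set (q := sqrt s).
  assert (Hs : 0 <= s < 1) by (split; [apply Cmod_ge_0 | auto]).
  assert (Hq : 0 <= q < 1).
  { split; [apply sqrt_pos|]. unfold q. rewrite <- sqrt_1. apply sqrt_lt_1_alt. lra. }
  pose proof (Cminus_1_neq_0 w Hw) as Hw1.
  assert (Herr : Clim (fun N => RtoC (sum_f_R0 beta N) * w ^ S N)%C 0).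
  { apply (Clim_0_of_geom_bound _ K q); auto. intros N.
    rewrite Cmod_mult, Cmod_pow, Cmod_RtoC_nonneg by (apply cond_pos_sum; auto). fold s.
    apply Rle_trans with (sum_f_R0 beta N * s ^ N).
    { simpl pow. pose proof (cond_pos_sum beta N Hb). pose proof (pow_le s N (proj1 Hs)).
      assert (0 <= sum_f_R0 beta N * s ^ N) by (apply Rmult_le_pos; auto). nra. }
    rewrite Rmult_comm, scal_sum.
    apply Rle_trans with (sum_f_R0 (fun j => beta j * q ^ j) N * q ^ N).
    - rewrite (Rmult_comm _ (q ^ N)), scal_sum. apply sum_Rle. intros j Hj.
      pose proof (sqrt_pow_bound s j N ltac:(lra) Hj). pose proof (Hb j).
      fold q in H. nra.
    - apply Rmult_le_compat_r; [apply pow_le; lra | apply HK]. }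
  apply (Clim_ext (fun N => / (1 - w) * (sum_n (fun j => RtoC (beta j) * w ^ j) N
                                       - RtoC (sum_f_R0 beta N) * w ^ S N))%C).
  { intros N. rewrite <- one_sub_mul_partial_sums. Ceq. field. auto. }
  replace (/ (1 - w) * L)%C with (/ (1 - w) * (L - 0))%C by ring.
  apply Clim_scal, Clim_minus; auto.
Qed.

Lemma Clim_nbinom_series p (w : C) : Cmod w < 1 ->
  Clim (sum_n (fun j => RtoC (nbinom p j) * w ^ j)%C) (/ (1 - w) ^ p)%C.
Proof.
  revert w. induction p; intros w Hw.
  - intros eps Heps. exists O. intros N _.
    assert (E : sum_n (fun j => RtoC (nbinom 0 j) * w ^ j)%C N = RtoC 1).
    { induction N; [rewrite sum_n_OC | rewrite sum_n_SC, IHN]; simpl; ring. }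
    rewrite E. replace (RtoC 1 - / (1 - w) ^ 0)%C with (RtoC 0) by (simpl; field; apply C1_neq_C0).
    rewrite Cmod_0. exact Heps.
  - set (q := sqrt (Cmod w)).
    assert (Hq : 0 <= q < 1).
    { split; [apply sqrt_pos|]. unfold q. rewrite <- sqrt_1. apply sqrt_lt_1_alt.
      split; [apply Cmod_ge_0 | auto]. }
    pose proof (Cminus_1_neq_0 w Hw) as Hw1.
    replace (/ (1 - w) ^ S p)%C with (/ (1 - w) * / (1 - w) ^ p)%C.
    2:{ simpl. field. split; auto. apply Cpow_nz. auto. }
    apply (Clim_partial_sums_series (nbinom p) w _ (fst (/ (1 - RtoC q) ^ p)%C)); auto.
    + apply nbinom_nonneg.
    + apply sum_f_R0_le_of_Clim.
      * intros j. apply Rmult_le_pos; [apply nbinom_nonneg | apply pow_le, sqrt_pos].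
      * apply (Clim_ext (fun N => sum_n (fun j => RtoC (nbinom p j) * RtoC q ^ j) N)%C).
        { intros N. apply sum_n_ext. intros j. rewrite RtoC_mult, RtoC_pow. reflexivity. }
        apply IHp. rewrite Cmod_RtoC_nonneg; lra.
Qed.

Definition disc_series (F : C -> C) (c : nat -> C) : Prop :=
  forall z, Cmod z < 1 -> Clim (sum_n (fun m => c m * z ^ m)%C) (F z).

Lemma Clim_series_terms_bounded (a : nat -> C) l :
  Clim (sum_n a) l -> exists K, forall m, Cmod (a m) <= K.
Proof.
  intros H. destruct (H (1 / 2)) as [N HN]; [lra|].
  exists (1 + sum_f_R0 (fun m => Cmod (a m)) N). intros m.
  pose proof (cond_pos_sum (fun m => Cmod (a m)) N (fun _ => Cmod_ge_0 _)).
  destruct (Nat.le_gt_cases m N) as [Hm | Hm].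
  - pose proof (term_le_sum_f_R0 (fun m => Cmod (a m)) m N (fun _ => Cmod_ge_0 _) Hm). lra.
  - destruct m as [|m]; [lia|].
    replace (a (S m)) with (sum_n a (S m) - sum_n a m)%C by (rewrite sum_n_SC; ring).
    pose proof (Cmod_sub_triangle (sum_n a (S m)) l (sum_n a m)).
    rewrite (Cmod_sub_sym l) in H1.
    pose proof (HN (S m) ltac:(lia)). pose proof (HN m ltac:(lia)). lra.
Qed.

(* Compare with the geometric series of ratio [r / rho], [rho = (1 + r) / 2]. *)
Lemma disc_series_abs_bounded F c : disc_series F c -> forall r, 0 <= r < 1 ->
  exists B, forall N, sum_f_R0 (fun m => Cmod (c m) * r ^ m) N <= B.
Proof.
  intros HF r Hr.
  set (rho := (1 + r) / 2).
  assert (Hrho : 0 < rho < 1) by (unfold rho; lra).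
  destruct (Clim_series_terms_bounded _ _ (HF (RtoC rho) ltac:(rewrite Cmod_RtoC_nonneg; lra)))
    as [K HK].
  set (q := r / rho).
  assert (Hq : 0 <= q < 1).
  { unfold q. split; [apply Rmult_le_pos; [lra | apply Rlt_le, Rinv_0_lt_compat; lra]|].
    apply Rmult_lt_reg_r with rho; [lra|]. unfold Rdiv.
    rewrite Rmult_assoc, Rinv_l by lra. unfold rho. lra. }
  exists (K * / (1 - q)). intros N.
  apply Rle_trans with (K * sum_f_R0 (fun m => q ^ m) N).
  - rewrite <- sum_f_R0_scal_l. apply sum_Rle. intros m _.
    specialize (HK m). rewrite Cmod_mult, Cmod_pow, Cmod_RtoC_nonneg in HK by lra.
    replace (r ^ m) with (rho ^ m * q ^ m)
      by (rewrite <- Rpow_mult_distr; f_equal; unfold q; field; lra).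
    pose proof (pow_le q m (proj1 Hq)). rewrite <- Rmult_assoc.
    apply Rmult_le_compat_r; auto.
  - assert (0 <= K) by (specialize (HK O); pose proof (Cmod_ge_0 (c O * RtoC rho ^ 0)%C); lra).
    apply Rmult_le_compat_l; auto. apply geom_sum_le; auto.
Qed.

Lemma cis_add a b : (cis a * cis b)%C = cis (a + b).
Proof. unfold cis. rewrite cos_plus, sin_plus. apply injective_projections; simpl; ring. Qed.

Lemma cis_conj a : Cconj (cis a) = cis (- a).
Proof. unfold cis, Cconj. rewrite cos_neg, sin_neg. reflexivity. Qed.

Lemma Cmod_cis t : Cmod (cis t) = 1.
Proof.
  unfold Cmod, cis. simpl.
  replace (cos t * (cos t * 1) + sin t * (sin t * 1)) with ((sin t)² + (cos t)²)
    by (unfold Rsqr; ring).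
  rewrite sin2_cos2. apply sqrt_1.
Qed.

Lemma Cmod_polar r t : 0 <= r -> Cmod (RtoC r * cis t)%C = r.
Proof. intros. rewrite Cmod_mult, Cmod_cis, Cmod_RtoC_nonneg; auto; ring. Qed.

Lemma polar_pow r t m : ((RtoC r * cis t) ^ m)%C = (RtoC (r ^ m) * cis (INR m * t))%C.
Proof.
  induction m.
  - simpl. unfold cis. rewrite Rmult_0_l, cos_0, sin_0.
    apply injective_projections; simpl; ring.
  - rewrite Cpow_S, IHm, S_INR.
    replace ((INR m + 1) * t) with (t + INR m * t) by ring. rewrite <- cis_add.
    simpl pow. rewrite RtoC_mult. ring.
Qed.

Local Notation CR := C_R_CompleteNormedModule.

Lemma is_RInt_C_pair (g : R -> C) a b (l : C) :
  is_RInt (fun t => fst (g t)) a b (fst l) -> is_RInt (fun t => snd (g t)) a b (snd l) ->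
  is_RInt (V := CR) g a b l.
Proof.
  intros H1 H2. destruct l as [x y].
  apply (is_RInt_fct_extend_pair (U := R_NormedModule) (V := R_NormedModule) g a b x y H1 H2).
Qed.

Lemma is_RInt_C_fst (g : R -> C) a b (l : C) :
  is_RInt (V := CR) g a b l -> is_RInt (fun t => fst (g t)) a b (fst l).
Proof. apply (is_RInt_fct_extend_fst (U := R_NormedModule) (V := R_NormedModule)). Qed.

Lemma is_RInt_C_snd (g : R -> C) a b (l : C) :
  is_RInt (V := CR) g a b l -> is_RInt (fun t => snd (g t)) a b (snd l).
Proof. apply (is_RInt_fct_extend_snd (U := R_NormedModule) (V := R_NormedModule)). Qed.

Lemma is_RInt_C_value (g : R -> C) a b (l l' : C) :
  is_RInt (V := CR) g a b l -> l = l' -> is_RInt (V := CR) g a b l'.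
Proof. intros H <-. exact H. Qed.

Lemma CRInt_correct (g : R -> C) a b (l : C) : is_RInt (V := CR) g a b l -> CRInt g a b = l.
Proof.
  intros H. unfold CRInt. destruct l as [x y].
  pose proof (is_RInt_unique (V := R_CompleteNormedModule) _ _ _ _ (is_RInt_C_fst g a b _ H)).
  pose proof (is_RInt_unique (V := R_CompleteNormedModule) _ _ _ _ (is_RInt_C_snd g a b _ H)).
  simpl in *. congruence.
Qed.

Lemma is_RInt_Cplus (f g : R -> C) a b (l k : C) :
  is_RInt (V := CR) f a b l -> is_RInt (V := CR) g a b k ->
  is_RInt (V := CR) (fun t => f t + g t)%C a b (l + k)%C.
Proof. apply (is_RInt_plus (V := CR)). Qed.

Lemma is_RInt_Cmult_l (g : R -> C) a b (l K : C) :
  is_RInt (V := CR) g a b l -> is_RInt (V := CR) (fun t => K * g t)%C a b (K * l)%C.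
Proof.
  intros H. pose proof (is_RInt_C_fst g a b l H). pose proof (is_RInt_C_snd g a b l H).
  destruct K as [p q]. apply is_RInt_C_pair; simpl.
  - apply (is_RInt_minus (V := R_NormedModule) (fun t => p * fst (g t)) (fun t => q * snd (g t)));
      apply (is_RInt_scal (V := R_NormedModule)); auto.
  - apply (is_RInt_plus (V := R_NormedModule) (fun t => p * snd (g t)) (fun t => q * fst (g t)));
      apply (is_RInt_scal (V := R_NormedModule)); auto.
Qed.

Lemma is_RInt_cis_mul_period (w : R) :
  w <> 0 -> sin (w * (2 * PI)) = 0 -> cos (w * (2 * PI)) = 1 ->
  is_RInt (V := CR) (fun t => cis (w * t)) 0 (2 * PI) (RtoC 0).
Proof.
  intros Hw Hs Hc. apply is_RInt_C_pair; simpl.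
  - assert (H : is_RInt (fun t => cos (w * t)) 0 (2 * PI)
                  (minus (sin (w * (2 * PI)) / w) (sin (w * 0) / w))).
    { apply (is_RInt_derive (V := R_CompleteNormedModule) (fun t => sin (w * t) / w)).
      - intros x _. auto_derive; auto. field. auto.
      - intros x _. apply (ex_derive_continuous (fun t => cos (w * t))). auto_derive. auto. }
    replace (minus _ _) with 0 in H; auto.
    rewrite Hs, Rmult_0_r, sin_0. unfold minus, plus, opp; simpl. field. auto.
  - assert (H : is_RInt (fun t => sin (w * t)) 0 (2 * PI)
                  (minus (- cos (w * (2 * PI)) / w) (- cos (w * 0) / w))).
    { apply (is_RInt_derive (V := R_CompleteNormedModule) (fun t => - cos (w * t) / w)).
      - intros x _. auto_derive; auto. field. auto.
      - intros x _. apply (ex_derive_continuous (fun t => sin (w * t))). auto_derive. auto. }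
    replace (minus _ _) with 0 in H; auto.
    rewrite Hc, Rmult_0_r, cos_0. unfold minus, plus, opp; simpl. field. auto.
Qed.

Lemma is_RInt_cis_nat_sub (m j : nat) :
  is_RInt (V := CR) (fun t => cis ((INR m - INR j) * t)) 0 (2 * PI)
    (if Nat.eqb m j then RtoC (2 * PI) else RtoC 0).
Proof.
  destruct (Nat.eqb_spec m j) as [<- | Hmj].
  - apply is_RInt_C_pair; simpl.
    + apply (is_RInt_ext (fun _ => 1)); [intros; rewrite Rminus_diag, Rmult_0_l, cos_0; auto|].
      replace (2 * PI) with (scal (2 * PI - 0) 1) at 2
        by (rewrite Rminus_0_r; unfold scal; simpl; unfold mult; simpl; ring).
      apply (is_RInt_const (V := R_NormedModule)).
    + apply (is_RInt_ext (fun _ => 0)); [intros; rewrite Rminus_diag, Rmult_0_l, sin_0; auto|].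
      replace 0 with (scal (2 * PI - 0) 0) at 2
        by (unfold scal; simpl; unfold mult; simpl; ring).
      apply (is_RInt_const (V := R_NormedModule)).
  - apply is_RInt_cis_mul_period.
    + intros E. apply Hmj, INR_eq. lra.
    + replace ((INR m - INR j) * (2 * PI)) with (0 + 2 * INR m * PI - (0 + 2 * INR j * PI)) by ring.
      rewrite sin_minus, !sin_period, !cos_period, sin_0. ring.
    + replace ((INR m - INR j) * (2 * PI)) with (0 + 2 * INR m * PI - (0 + 2 * INR j * PI)) by ring.
      rewrite cos_minus, !sin_period, !cos_period, sin_0, cos_0. ring.
Qed.

Definition psum (c : nat -> C) (r : R) (N : nat) (t : R) : C :=
  sum_n (fun m => c m * (RtoC r * cis t) ^ m)%C N.

Lemma psum_O c r t : psum c r O t = (c O * (RtoC r * cis t) ^ 0)%C.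
Proof. apply sum_n_OC. Qed.

Lemma psum_S c r N t :
  psum c r (S N) t = (psum c r N t + c (S N) * (RtoC r * cis t) ^ S N)%C.
Proof. apply sum_n_SC. Qed.

Lemma is_RInt_monomials (cm dj : C) r m j :
  is_RInt (V := CR)
    (fun t => (cm * (RtoC r * cis t) ^ m) * Cconj (dj * (RtoC r * cis t) ^ j))%C 0 (2 * PI)
    (if Nat.eqb m j then RtoC (2 * PI) * (cm * Cconj dj * RtoC (r ^ (2 * m))) else RtoC 0)%C.
Proof.
  apply (is_RInt_ext
    (fun t => (cm * Cconj dj * RtoC (r ^ m * r ^ j)) * cis ((INR m - INR j) * t))%C).
  { intros t _. rewrite !polar_pow, !Cmult_conj, Cconj_RtoC, cis_conj.
    replace ((INR m - INR j) * t) with (INR m * t + - (INR j * t)) by ring.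
    rewrite <- cis_add, RtoC_mult. Ceq. ring. }
  eapply is_RInt_C_value; [apply is_RInt_Cmult_l, is_RInt_cis_nat_sub|].
  destruct (Nat.eqb_spec m j) as [<- | _]; Ceq; [|ring].
  rewrite <- pow_add. replace (m + m)%nat with (2 * m)%nat by lia. ring.
Qed.

Lemma is_RInt_monomial_psum (cm : C) m (d : nat -> C) r M :
  is_RInt (V := CR) (fun t => (cm * (RtoC r * cis t) ^ m) * Cconj (psum d r M t))%C 0 (2 * PI)
    (if Nat.leb m M then RtoC (2 * PI) * (cm * Cconj (d m) * RtoC (r ^ (2 * m))) else RtoC 0)%C.
Proof.
  induction M.
  - apply (is_RInt_ext
      (fun t => (cm * (RtoC r * cis t) ^ m) * Cconj (d O * (RtoC r * cis t) ^ 0))%C).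
    { intros t _. rewrite psum_O. reflexivity. }
    pose proof (is_RInt_monomials cm (d O) r m O) as H. destruct m; exact H.
  - apply (is_RInt_ext (fun t => (cm * (RtoC r * cis t) ^ m) * Cconj (psum d r M t)
                                + (cm * (RtoC r * cis t) ^ m)
                                  * Cconj (d (S M) * (RtoC r * cis t) ^ S M))%C).
    { intros t _. rewrite psum_S, Cplus_conj. Ceq. ring. }
    eapply is_RInt_C_value; [apply is_RInt_Cplus; [apply IHM | apply is_RInt_monomials]|].
    destruct (Nat.leb_spec m M), (Nat.eqb_spec m (S M)), (Nat.leb_spec m (S M));
      try lia; subst; Ceq; ring.
Qed.

Lemma is_RInt_psum_psum (c d : nat -> C) r N M :
  is_RInt (V := CR) (fun t => psum c r N t * Cconj (psum d r M t))%C 0 (2 * PI)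
    (RtoC (2 * PI) * sum_n (fun m => if Nat.leb m M
                                     then c m * Cconj (d m) * RtoC (r ^ (2 * m)) else RtoC 0) N)%C.
Proof.
  induction N.
  - apply (is_RInt_ext (fun t => (c O * (RtoC r * cis t) ^ 0) * Cconj (psum d r M t))%C).
    { intros t _. rewrite psum_O. reflexivity. }
    eapply is_RInt_C_value; [apply is_RInt_monomial_psum|].
    rewrite sum_n_OC. destruct (Nat.leb 0 M); Ceq; ring.
  - apply (is_RInt_ext (fun t => psum c r N t * Cconj (psum d r M t)
                                + (c (S N) * (RtoC r * cis t) ^ S N) * Cconj (psum d r M t))%C).
    { intros t _. rewrite psum_S. Ceq. ring. }
    eapply is_RInt_C_value; [apply is_RInt_Cplus; [apply IHN | apply is_RInt_monomial_psum]|].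
    rewrite sum_n_SC. destruct (Nat.leb (S N) M); Ceq; ring.
Qed.

Lemma is_RInt_psum_psum_diag (c d : nat -> C) r N :
  is_RInt (V := CR) (fun t => psum c r N t * Cconj (psum d r N t))%C 0 (2 * PI)
    (RtoC (2 * PI) * sum_n (fun m => c m * Cconj (d m) * RtoC (r ^ (2 * m))) N)%C.
Proof.
  eapply is_RInt_C_value; [apply is_RInt_psum_psum|]. f_equal.
  apply sum_n_ext_loc. intros m Hm. destruct (Nat.leb_spec m N); [reflexivity | lia].
Qed.

Lemma Cmod_psum_le c r N t :
  0 <= r -> Cmod (psum c r N t) <= sum_f_R0 (fun m => Cmod (c m) * r ^ m) N.
Proof.
  intros Hr. eapply Rle_trans; [apply Cmod_sum_n|]. right. apply sum_eq. intros m _.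
  rewrite Cmod_mult, Cmod_pow, Cmod_polar; auto.
Qed.

Lemma Cmod_psum_sub_le c r N M t : 0 <= r -> (N <= M)%nat ->
  Cmod (psum c r M t - psum c r N t)
  <= sum_f_R0 (fun m => Cmod (c m) * r ^ m) M - sum_f_R0 (fun m => Cmod (c m) * r ^ m) N.
Proof.
  intros Hr H. induction H.
  - replace (psum c r N t - psum c r N t)%C with (RtoC 0) by ring. rewrite Cmod_0. lra.
  - rewrite psum_S, tech5.
    replace (psum c r m t + c (S m) * (RtoC r * cis t) ^ S m - psum c r N t)%C
      with ((psum c r m t - psum c r N t) + c (S m) * (RtoC r * cis t) ^ S m)%C by ring.
    eapply Rle_trans; [apply Cmod_triangle|].
    rewrite Cmod_mult, Cmod_pow, Cmod_polar; auto. lra.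
Qed.

Lemma Cmod_limit_sub_psum_le (x : C) c r L t :
  0 <= r -> (forall N, sum_f_R0 (fun m => Cmod (c m) * r ^ m) N <= L) ->
  Clim (fun N => psum c r N t) x ->
  forall N, Cmod (x - psum c r N t) <= L - sum_f_R0 (fun m => Cmod (c m) * r ^ m) N.
Proof.
  intros Hr HL Hx N. apply (Clim_le _ _ _ _ Hx).
  exists N. intros M HM. pose proof (HL M). pose proof (Cmod_psum_sub_le c r N M t Hr HM). lra.
Qed.

Lemma Cmod_mul_conj_sub_le (x y X Y : C) :
  Cmod (x * Cconj y - X * Cconj Y) <= Cmod (X - x) * Cmod Y + Cmod x * Cmod (Y - y).
Proof.
  replace (x * Cconj y - X * Cconj Y)%C
    with (- ((X - x) * Cconj Y + x * Cconj (Y - y)))%C by (rewrite Cminus_conj; ring).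
  rewrite Cmod_opp. eapply Rle_trans; [apply Cmod_triangle|].
  rewrite !Cmod_mult, !Cmod_conj. lra.
Qed.

Lemma Cmod_polar_lt_1 r t : 0 <= r < 1 -> Cmod (RtoC r * cis t)%C < 1.
Proof. intros Hr. rewrite Cmod_polar; lra. Qed.

Definition Cunif_cv (u : nat -> R -> C) (f : R -> C) : Prop :=
  forall eps, 0 < eps -> exists N0, forall N t, (N0 <= N)%nat -> Cmod (f t - u N t) < eps.

Lemma psum_unif_cv F c r : 0 <= r < 1 -> disc_series F c ->
  exists L, 0 <= L /\ (forall N t, Cmod (psum c r N t) <= L) /\
    (forall t, Cmod (F (RtoC r * cis t)%C) <= L) /\
    Cunif_cv (psum c r) (fun t => F (RtoC r * cis t)%C).
Proof.
  intros Hr HF.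
  set (ac := fun m => Cmod (c m) * r ^ m).
  assert (Hac : forall m, 0 <= ac m).
  { intros m. apply Rmult_le_pos; [apply Cmod_ge_0 | apply pow_le; lra]. }
  destruct (disc_series_abs_bounded F c HF r Hr) as [B HB].
  destruct (nonneg_series_cv ac B Hac HB) as [L [HL HLe]].
  assert (Hsub := fun t => Cmod_limit_sub_psum_le _ c r L t (proj1 Hr) HLe
                             (HF _ (Cmod_polar_lt_1 r t Hr))).
  exists L. repeat split.
  - pose proof (HLe O). pose proof (Hac O). simpl in *. lra.
  - intros N t. eapply Rle_trans; [apply Cmod_psum_le; lra | apply HLe].
  - intros t. specialize (Hsub t O). pose proof (Cmod_psum_le c r O t (proj1 Hr)) as H0.
    fold ac in Hsub, H0.
    replace (F (RtoC r * cis t)%C) with ((F (RtoC r * cis t)%C - psum c r O t) + psum c r O t)%C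
      by ring.
    eapply Rle_trans; [apply Cmod_triangle | lra].
  - intros eps Heps. destruct (HL eps Heps) as [N0 HN0]. exists N0. intros N t HN.
    specialize (HN0 N HN). unfold R_dist in HN0.
    rewrite Rabs_minus_sym, Rabs_pos_eq in HN0 by (pose proof (HLe N); lra).
    eapply Rle_lt_trans; [apply Hsub | exact HN0].
Qed.

Lemma mul_conj_unif_cv (u v : nat -> R -> C) (f g : R -> C) Lu Lg :
  0 <= Lu -> 0 <= Lg -> (forall N t, Cmod (u N t) <= Lu) -> (forall t, Cmod (g t) <= Lg) ->
  Cunif_cv u f -> Cunif_cv v g ->
  filterlim (fun N t => u N t * Cconj (v N t))%C eventually
    (locally (T := fct_UniformSpace R CR) (fun t => f t * Cconj (g t))%C).
Proof.
  intros HLu HLg Hu Hg Huf Hvg. apply filterlim_locally. intros eps.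
  destruct (Huf (eps / (2 * (Lg + 1)))) as [N1 HN1].
  { apply Rdiv_lt_0_compat; [apply cond_pos | lra]. }
  destruct (Hvg (eps / (2 * (Lu + 1)))) as [N2 HN2].
  { apply Rdiv_lt_0_compat; [apply cond_pos | lra]. }
  exists (max N1 N2). intros N HN t.
  apply (norm_compat1 (V := C_NormedModule)).
  change (Cmod (u N t * Cconj (v N t) - f t * Cconj (g t)) < eps).
  eapply Rle_lt_trans; [apply Cmod_mul_conj_sub_le|].
  specialize (HN1 N t ltac:(lia)). specialize (HN2 N t ltac:(lia)).
  pose proof (Hu N t). pose proof (Hg t).
  pose proof (Cmod_ge_0 (f t - u N t)). pose proof (Cmod_ge_0 (u N t)).
  pose proof (Cmod_ge_0 (g t)). pose proof (Cmod_ge_0 (g t - v N t)).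
  assert (Cmod (f t - u N t) * (Lg + 1) < eps / 2).
  { apply Rmult_lt_compat_r with (r := Lg + 1) in HN1; [|lra].
    replace (eps / (2 * (Lg + 1)) * (Lg + 1)) with (eps / 2) in HN1 by (field; lra). lra. }
  assert (Cmod (g t - v N t) * (Lu + 1) < eps / 2).
  { apply Rmult_lt_compat_r with (r := Lu + 1) in HN2; [|lra].
    replace (eps / (2 * (Lu + 1)) * (Lu + 1)) with (eps / 2) in HN2 by (field; lra). lra. }
  nra.
Qed.

Lemma inner_r_series F G c d r : 0 <= r < 1 -> disc_series F c -> disc_series G d ->
  Clim (sum_n (fun m => c m * Cconj (d m) * RtoC (r ^ (2 * m))))%C (inner_r F G r).
Proof.
  intros Hr HF HG.
  destruct (psum_unif_cv F c r Hr HF) as [Lc [HLc [Hc [_ HcF]]]].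
  destruct (psum_unif_cv G d r Hr HG) as [Ld [HLd [_ [Hd HdG]]]].
  destruct (filterlim_RInt (U := nat) (V := CR) _ 0 (2 * PI) eventually eventually_filter _
     (fun N => RtoC (2 * PI) * sum_n (fun m => c m * Cconj (d m) * RtoC (r ^ (2 * m))) N)%C
     (is_RInt_psum_psum_diag c d r) (mul_conj_unif_cv _ _ _ _ Lc Ld HLc HLd Hc Hd HcF HdG))
    as [I [HI HIint]].
  unfold inner_r. rewrite (CRInt_correct _ _ _ _ HIint).
  apply filterlim_Clim, (Clim_scal (RtoC (/ (2 * PI)))) in HI.
  eapply Clim_ext; [|exact HI]. intros n. simpl.
  rewrite Cmult_assoc, <- RtoC_mult, Rinv_l by (pose proof PI_RGT_0; lra). Ceq. ring.
Qed.

Lemma hinner_of_radial_limit F G l :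
  filterlim (inner_r F G) (at_left 1) (locally (T := C_UniformSpace) l) -> hinner F G = l.
Proof.
  intros H. unfold hinner.
  pose proof (epsilon_spec (inhabits (RtoC 0))
    (fun l => filterlim (inner_r F G) (at_left 1) (locally l)) (ex_intro _ l H)) as He.
  apply (@filterlim_locally_unique _ C_AbsRing C_NormedModule (at_left 1)
    (Proper_StrongProper _ (at_left_proper_filter 1)) (inner_r F G)); auto.
Qed.

Lemma ex_Clim_of_abs_bounded (u : nat -> C) B :
  (forall N, sum_f_R0 (fun m => Cmod (u m)) N <= B) -> exists S, Clim (sum_n u) S.
Proof.
  intros HB.
  destruct (nonneg_series_cv (fun m => Cmod (u m)) B (fun m => Cmod_ge_0 _) HB) as [L [HL _]].
  destruct (ex_series_le (K := C_AbsRing) (V := C_CompleteNormedModule) u (fun m => Cmod (u m))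
    (fun n => Rle_refl _)) as [S HS].
  { exists L. apply is_series_Reals. exact HL. }
  exists S. apply is_series_Clim. exact HS.
Qed.

Lemma Cmod_mul_pow_sub_self_le (u : C) r m N : 0 <= r <= 1 ->
  Cmod (u * RtoC (r ^ (2 * m)) - u)
  <= Cmod u * (1 - r ^ (2 * N)) + (if (N <? m)%nat then Cmod u else 0).
Proof.
  intros Hr.
  replace (u * RtoC (r ^ (2 * m)) - u)%C with (u * RtoC (- (1 - r ^ (2 * m))))%C
    by (rewrite RtoC_opp, RtoC_minus; ring).
  rewrite Cmod_mult, Cmod_R, Rabs_Ropp.
  pose proof (pow_le r (2 * m) (proj1 Hr)). pose proof (pow_le_1 r (2 * m) Hr).
  pose proof (pow_le_1 r (2 * N) Hr). pose proof (Cmod_ge_0 u).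
  rewrite Rabs_pos_eq by lra.
  destruct (Nat.ltb_spec N m).
  - pose proof (pow_le r (2 * N) (proj1 Hr)). nra.
  - pose proof (pow_le_pow_le_1 r (2 * m) (2 * N) Hr ltac:(lia)). nra.
Qed.

Section RadialLimit.

Variables (F G : C -> C) (c d : nat -> C) (S : C) (U : R).

Let a m := Cmod (c m) * Cmod (d m).

Hypotheses (HF : disc_series F c) (HG : disc_series G d)
  (HS : Clim (sum_n (fun m => c m * Cconj (d m))%C) S)
  (HU : forall M, sum_f_R0 a M <= U).

Let a_nonneg m : 0 <= a m.
Proof. apply Rmult_le_pos; apply Cmod_ge_0. Qed.

(* Abel summation: a term of index [m <= N] differs from its weighted version by
   at most [1 - r^(2N) <= 2N (1 - r)] of its size; the others form the tail. *)
Lemma inner_r_sub_series_le r N : 0 <= r < 1 ->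
  Cmod (inner_r F G r - S) <= INR (2 * N) * (1 - r) * U + (U - sum_f_R0 a N).
Proof.
  intros Hr.
  apply (Clim_Cmod_le _ _ _ (Clim_minus _ _ _ _ (inner_r_series F G c d r Hr HF HG) HS)).
  exists N. intros M HM. rewrite <- sum_n_Cminus.
  eapply Rle_trans; [apply Cmod_sum_n|].
  apply Rle_trans with
    (sum_f_R0 (fun m => a m * (1 - r ^ (2 * N)) + (if (N <? m)%nat then a m else 0)) M).
  { apply sum_Rle. intros m _.
    pose proof (Cmod_mul_pow_sub_self_le (c m * Cconj (d m)) r m N ltac:(lra)) as E.
    rewrite Cmod_mult, Cmod_conj in E. exact E. }
  rewrite sum_plus, sum_f_R0_tail, <- scal_sum.
  pose proof (one_sub_pow_le r (2 * N) ltac:(lra)).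
  pose proof (pow_le_1 r (2 * N) ltac:(lra)).
  pose proof (HU M). pose proof (HU (max M N)). pose proof (cond_pos_sum a M a_nonneg).
  assert ((1 - r ^ (2 * N)) * sum_f_R0 a M <= INR (2 * N) * (1 - r) * U).
  { apply Rle_trans with ((1 - r ^ (2 * N)) * U); [apply Rmult_le_compat_l; lra|].
    apply Rmult_le_compat_r; lra. }
  lra.
Qed.

Lemma inner_r_radial_limit : Un_cv (sum_f_R0 a) U ->
  filterlim (inner_r F G) (at_left 1) (locally (T := C_UniformSpace) S).
Proof.
  intros HUcv. apply filterlim_locally. intros eps.
  destruct (HUcv (eps / 2)) as [N HN]; [pose proof (cond_pos eps); lra|].
  specialize (HN N (le_n N)). unfold R_dist in HN.
  rewrite Rabs_minus_sym, Rabs_pos_eq in HN by (pose proof (HU N); lra).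
  assert (HU0 : 0 <= U) by (pose proof (HU O); pose proof (a_nonneg O); simpl in *; lra).
  set (k := INR (2 * N) * U + 1).
  assert (Hk : 0 < k) by (unfold k; pose proof (pos_INR (2 * N)); nra).
  assert (Hd : 0 < Rmin 1 (eps / (2 * k))).
  { apply Rmin_pos; [lra | apply Rdiv_lt_0_compat; [apply cond_pos | lra]]. }
  exists (mkposreal _ Hd). intros y Hy Hy1.
  change (Rabs (y - 1) < Rmin 1 (eps / (2 * k))) in Hy.
  rewrite Rabs_minus_sym, Rabs_pos_eq in Hy by lra.
  pose proof (Rmin_l 1 (eps / (2 * k))). pose proof (Rmin_r 1 (eps / (2 * k))).
  apply (norm_compat1 (V := C_NormedModule)).
  change (Cmod (inner_r F G y - S) < eps).
  eapply Rle_lt_trans; [apply (inner_r_sub_series_le y N); lra|].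
  assert (INR (2 * N) * (1 - y) * U <= k * (1 - y))
    by (unfold k; pose proof (pos_INR (2 * N)); nra).
  assert (k * (1 - y) < k * (eps / (2 * k))) by (apply Rmult_lt_compat_l; lra).
  replace (k * (eps / (2 * k))) with (eps / 2) in H2 by (field; lra).
  lra.
Qed.

End RadialLimit.

Lemma hinner_series F G c d B :
  disc_series F c -> disc_series G d ->
  (forall N, sum_f_R0 (fun m => Cmod (c m) * Cmod (d m)) N <= B) ->
  Clim (sum_n (fun m => c m * Cconj (d m))%C) (hinner F G).
Proof.
  intros HF HG HB.
  destruct (ex_Clim_of_abs_bounded (fun m => c m * Cconj (d m))%C B) as [S HS].
  { intros N. eapply Rle_trans; [|apply (HB N)]. right. apply sum_eq. intros.
    rewrite Cmod_mult, Cmod_conj. reflexivity. }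
  destruct (nonneg_series_cv _ B (fun m => Rmult_le_pos _ _ (Cmod_ge_0 (c m)) (Cmod_ge_0 (d m))) HB)
    as [U [HUcv HU]].
  rewrite (hinner_of_radial_limit F G S); auto.
  apply (inner_r_radial_limit F G c d S U); auto.
Qed.

Lemma fst_inner_r_diag f r :
  fst (inner_r f f r) = / (2 * PI) * RInt (fun t => Cmod (f (RtoC r * cis t)%C) ^ 2) 0 (2 * PI).
Proof.
  unfold inner_r, CRInt. simpl. rewrite Rmult_0_l, Rminus_0_r. f_equal.
  apply RInt_ext. intros t _.
  pose proof (f_equal fst (Cmod2_conj (f (RtoC r * cis t)%C))) as E. simpl in E. lra.
Qed.

Lemma H2_coef_square_summable f : H2 f ->
  exists c, disc_series f c /\
    exists B, forall N, sum_f_R0 (fun m => Cmod (c m) ^ 2) N <= B.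
Proof.
  intros [[c Hc] [M HM]].
  assert (HF : disc_series f c) by (intros z Hz; apply is_series_Clim, Hc, Hz).
  exists c. split; auto. exists M. intros N.
  apply (le_of_forall_pow_mul_le _ _ (2 * N)).
  { apply cond_pos_sum. intros; apply pow2_ge_0. }
  intros r Hr.
  assert (Hsum : forall K,
    sum_f_R0 (fun m => Cmod (c m) ^ 2 * r ^ (2 * m)) K <= fst (inner_r f f r)).
  { apply sum_f_R0_le_of_Clim.
    - intros m. apply Rmult_le_pos; [apply pow2_ge_0 | apply pow_le; lra].
    - eapply Clim_ext; [|apply (inner_r_series f f c c r Hr HF HF)].
      intros K. apply sum_n_ext. intros m. rewrite RtoC_mult, Cmod2_conj. reflexivity. }
  rewrite fst_inner_r_diag in Hsum. specialize (HM r Hr). specialize (Hsum N).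
  eapply Rle_trans; [|exact HM]. eapply Rle_trans; [|exact Hsum].
  rewrite scal_sum. apply sum_Rle. intros m Hm.
  apply Rmult_le_compat_l; [apply pow2_ge_0 | apply pow_le_pow_le_1; lia || lra].
Qed.

Lemma sum_f_R0_shift (g : nat -> R) n J :
  sum_f_R0 (fun m => if (m <? n)%nat then 0 else g (m - n)%nat) (n + J) = sum_f_R0 g J.
Proof.
  induction J.
  - rewrite Nat.add_0_r. destruct n as [|n]; [reflexivity|]. simpl.
    rewrite (sum_eq _ (fun _ => 0)), sum_cte
      by (intros m Hm; destruct (Nat.ltb_spec m (S n)); lia || lra).
    destruct (Nat.ltb_spec (S n) (S n)); [lia|]. rewrite Nat.sub_diag. ring.
  - replace (n + S J)%nat with (S (n + J)) by lia. rewrite !tech5, IHJ.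
    destruct (Nat.ltb_spec (S (n + J)) n); [lia|]. do 2 f_equal. lia.
Qed.

Lemma sum_f_R0_shift_le (g : nat -> R) n M : (forall j, 0 <= g j) ->
  sum_f_R0 (fun m => if (m <? n)%nat then 0 else g (m - n)%nat) M <= sum_f_R0 g M.
Proof.
  intros Hg. destruct (Nat.le_gt_cases n M) as [H | H].
  - replace M with (n + (M - n))%nat at 1 by lia. rewrite sum_f_R0_shift.
    apply sum_f_R0_le_mono; auto. lia.
  - rewrite (sum_eq _ (fun _ => 0)), sum_cte
      by (intros m Hm; destruct (Nat.ltb_spec m n); lia || lra).
    pose proof (cond_pos_sum g M Hg). lra.
Qed.

Lemma sum_f_R0_sq_le (b : nat -> R) K : (forall j, 0 <= b j) ->
  (forall N, sum_f_R0 b N <= K) -> forall N, sum_f_R0 (fun j => b j ^ 2) N <= K ^ 2.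
Proof.
  intros Hb HK N.
  assert (HbK : forall j, b j <= K).
  { intros j. eapply Rle_trans; [apply (term_le_sum_f_R0 b j j Hb (le_n j)) | apply HK]. }
  apply Rle_trans with (K * sum_f_R0 b N).
  - rewrite <- sum_f_R0_scal_l. apply sum_Rle. intros j _.
    pose proof (Hb j). pose proof (HbK j). nra.
  - pose proof (HK N). pose proof (HbK O). pose proof (Hb O). replace (K ^ 2) with (K * K) by ring.
    apply Rmult_le_compat_l; lra.
Qed.

(* From [k_na n a z = n! z^n sum_j nbinom (n + 1) j (conj a z)^j]. *)
Definition kcoef (n : nat) (a : C) (m : nat) : C :=
  if (m <? n)%nat then RtoC 0
  else (RtoC (INR (fact n) * nbinom (S n) (m - n)) * Cconj a ^ (m - n))%C.

Lemma kcoef_n n a : kcoef n a n = RtoC (INR (fact n)).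
Proof.
  unfold kcoef. destruct (Nat.ltb_spec n n); [lia|].
  rewrite Nat.sub_diag, nbinom_0, Rmult_1_r. Ceq. ring.
Qed.

Lemma sum_n_kcoef n a (z : C) N :
  @eq C (sum_n (fun m => kcoef n a m * z ^ m)%C (n + N))
    (RtoC (INR (fact n)) * z ^ n * sum_n (fun j => RtoC (nbinom (S n) j) * (Cconj a * z) ^ j) N)%C.
Proof.
  assert (Hpre : forall M, (M < n)%nat ->
                 @eq C (sum_n (fun m => kcoef n a m * z ^ m)%C M) (RtoC 0)).
  { induction M; intros HM.
    - rewrite sum_n_OC. unfold kcoef. destruct (Nat.ltb_spec 0 n); [Ceq; ring | lia].
    - rewrite sum_n_SC, IHM by lia. unfold kcoef.
      destruct (Nat.ltb_spec (S M) n); [Ceq; ring | lia]. }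
  induction N.
  - rewrite Nat.add_0_r, sum_n_OC, nbinom_0.
    destruct n as [|n]; [rewrite sum_n_OC | rewrite sum_n_SC, Hpre by lia];
      rewrite kcoef_n; Ceq; ring.
  - replace (n + S N)%nat with (S (n + N)) by lia.
    rewrite !sum_n_SC, IHN. unfold kcoef at 1.
    destruct (Nat.ltb_spec (S (n + N)) n); [lia|].
    replace (S (n + N) - n)%nat with (S N) by lia.
    replace (S (n + N)) with (n + S N)%nat by lia.
    rewrite Cpow_add_r, Cpow_mult_l, RtoC_mult. ring.
Qed.

Lemma k_na_series n a : Cmod a < 1 -> disc_series (k_na n a) (kcoef n a).
Proof.
  intros Ha z Hz. apply (Clim_shift _ n).
  assert (Haz : Cmod (Cconj a * z) < 1).
  { rewrite Cmod_mult, Cmod_conj. pose proof (Cmod_ge_0 a). pose proof (Cmod_ge_0 z). nra. }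
  eapply Clim_ext; [intros N; symmetry; apply sum_n_kcoef|].
  unfold k_na, Cdiv.
  apply Clim_scal. apply (Clim_nbinom_series (S n)); auto.
Qed.

Lemma kcoef_square_bounded n a : Cmod a < 1 ->
  exists B, forall M, sum_f_R0 (fun m => Cmod (kcoef n a m) ^ 2) M <= B.
Proof.
  intros Ha. set (s := Cmod a).
  assert (Hs : 0 <= s < 1) by (split; [apply Cmod_ge_0 | auto]).
  set (beta := fun j => INR (fact n) * (nbinom (S n) j * s ^ j)).
  assert (Hb : forall j, 0 <= beta j).
  { intros j. unfold beta. pose proof (pos_INR (fact n)). pose proof (nbinom_nonneg (S n) j).
    pose proof (pow_le s j (proj1 Hs)). apply Rmult_le_pos; auto. apply Rmult_le_pos; auto. }
  assert (HK : forall N, sum_f_R0 beta N <= INR (fact n) * fst (/ (1 - RtoC s) ^ S n)%C).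
  { intros N. unfold beta. rewrite sum_f_R0_scal_l. apply Rmult_le_compat_l; [apply pos_INR|].
    apply sum_f_R0_le_of_Clim.
    - intros j. pose proof (Hb j). pose proof (nbinom_nonneg (S n) j).
      apply Rmult_le_pos; auto. apply pow_le; lra.
    - eapply Clim_ext; [|apply Clim_nbinom_series; rewrite Cmod_RtoC_nonneg; lra].
      intros N'. apply sum_n_ext. intros j. rewrite RtoC_mult, RtoC_pow. reflexivity. }
  eexists. intros M. eapply Rle_trans; [|apply (sum_f_R0_sq_le beta _ Hb HK M)].
  eapply Rle_trans; [|apply (sum_f_R0_shift_le (fun j => beta j ^ 2) n M); intros; apply pow2_ge_0].
  right. apply sum_eq. intros m _. unfold kcoef. destruct (m <? n)%nat.
  - rewrite Cmod_0. ring.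
  - rewrite Cmod_mult, Cmod_pow, Cmod_conj, Cmod_RtoC_nonneg.
    + unfold beta. fold s. ring.
    + apply Rmult_le_pos; [apply pos_INR | apply nbinom_nonneg].
Qed.

Lemma hnorm_k_na n a : Cmod a < 1 ->
  exists D, hnorm (k_na n a) = D /\ 0 < D /\
    forall M, sum_f_R0 (fun m => Cmod (kcoef n a m) ^ 2) M <= D ^ 2.
Proof.
  intros Ha.
  destruct (kcoef_square_bounded n a Ha) as [B HB].
  assert (Hk := hinner_series _ _ _ _ B (k_na_series n a Ha) (k_na_series n a Ha)
    ltac:(intros N; eapply Rle_trans; [|apply (HB N)]; right; apply sum_eq; intros; ring)).
  set (S := fst (hinner (k_na n a) (k_na n a))) in *.
  assert (HS : forall M, sum_f_R0 (fun m => Cmod (kcoef n a m) ^ 2) M <= S).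
  { apply sum_f_R0_le_of_Clim; [intros; apply pow2_ge_0|].
    eapply Clim_ext; [|exact Hk]. intros M. apply sum_n_ext. intros m. symmetry. apply Cmod2_conj. }
  assert (HS1 : 1 <= S).
  { eapply Rle_trans; [|apply (HS n)].
    eapply Rle_trans; [|apply (term_le_sum_f_R0 (fun m => Cmod (kcoef n a m) ^ 2) n n
                                 (fun _ => pow2_ge_0 _) (le_n n))].
    simpl. rewrite kcoef_n, Cmod_RtoC_nonneg by apply pos_INR.
    assert (1 <= INR (fact n)) by (apply (le_INR 1); pose proof (lt_O_fact n); lia).
    nra. }
  exists (sqrt S). repeat split; [apply sqrt_lt_R0; lra|].
  intros M. rewrite pow2_sqrt by lra. apply HS.
Qed.

Lemma e_na_series n a : Cmod a < 1 ->
  exists e, disc_series (e_na n a) e /\ (forall m, (m < n)%nat -> e m = 0%C) /\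
    forall M, sum_f_R0 (fun m => Cmod (e m) ^ 2) M <= 1.
Proof.
  intros Ha. destruct (hnorm_k_na n a Ha) as [D [HD [HD0 HDk]]].
  exists (fun m => kcoef n a m * RtoC (/ D))%C. repeat split.
  - intros z Hz. unfold e_na, Cdiv. rewrite HD, <- RtoC_inv, Cmult_comm by lra.
    eapply Clim_ext; [|apply Clim_scal, (k_na_series n a Ha z Hz)].
    intros N. cbv beta. rewrite <- sum_n_Cmult_l. apply sum_n_ext. intros m. Ceq. ring.
  - intros m Hm. unfold kcoef. destruct (Nat.ltb_spec m n); [Ceq; ring | lia].
  - intros M. apply Rmult_le_reg_l with (D ^ 2); [nra|].
    rewrite <- sum_f_R0_scal_l, Rmult_1_r.
    eapply Rle_trans; [|apply (HDk M)]. right. apply sum_eq. intros m _.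
    rewrite Cmod_mult, Cmod_RtoC_nonneg by (apply Rlt_le, Rinv_0_lt_compat; lra).
    field. lra.
Qed.

Lemma Rmult_le_weighted_sq x y t : 0 < t -> x * y <= x ^ 2 / (2 * t) + t / 2 * y ^ 2.
Proof.
  intros Ht. apply Rmult_le_reg_l with (2 * t); [lra|].
  replace (2 * t * (x ^ 2 / (2 * t) + t / 2 * y ^ 2)) with (x ^ 2 + (t * y) ^ 2) by (field; lra).
  pose proof (pow2_ge_0 (x - t * y)). nra.
Qed.

(* Cauchy-Schwarz in the form of [Rmult_le_weighted_sq], summed beyond [K]. *)
Lemma Cmod_hinner_le_of_tail F G c e K B T t :
  disc_series F c -> disc_series G e ->
  (forall N, sum_f_R0 (fun m => Cmod (c m) ^ 2) N <= B) ->
  (forall M, sum_f_R0 (fun m => Cmod (e m) ^ 2) M <= 1) ->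
  (forall m, (m <= K)%nat -> e m = 0%C) ->
  (forall M, sum_f_R0 (fun m => if (K <? m)%nat then Cmod (c m) ^ 2 else 0) M <= T) ->
  0 < t -> Cmod (hinner F G) <= T / (2 * t) + t / 2.
Proof.
  intros HF HG HB He He0 HT Ht.
  assert (Hce : forall N, sum_f_R0 (fun m => Cmod (c m) * Cmod (e m)) N <= (B + 1) / 2).
  { intros N.
    apply Rle_trans with (sum_f_R0 (fun m => Cmod (c m) ^ 2 / (2 * 1) + 1 / 2 * Cmod (e m) ^ 2) N).
    - apply sum_Rle. intros m _. apply Rmult_le_weighted_sq. lra.
    - rewrite sum_plus. unfold Rdiv. rewrite <- scal_sum, sum_f_R0_scal_l.
      pose proof (HB N). pose proof (He N). lra. }
  apply (Clim_Cmod_le _ _ _ (hinner_series F G c e _ HF HG Hce)).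
  exists O. intros M _. eapply Rle_trans; [apply Cmod_sum_n|].
  apply Rle_trans with (sum_f_R0 (fun m => / (2 * t) * (if (K <? m)%nat then Cmod (c m) ^ 2 else 0)
                                            + t / 2 * Cmod (e m) ^ 2) M).
  { apply sum_Rle. intros m _. rewrite Cmod_mult, Cmod_conj.
    destruct (Nat.ltb_spec K m).
    - pose proof (Rmult_le_weighted_sq (Cmod (c m)) (Cmod (e m)) t Ht). unfold Rdiv in *. lra.
    - rewrite He0, Cmod_0 by lia. rewrite Rmult_0_r, Rmult_0_r. pose proof (pow2_ge_0 0). nra. }
  rewrite sum_plus, !sum_f_R0_scal_l.
  pose proof (HT M). pose proof (He M).
  assert (0 < / (2 * t)) by (apply Rinv_0_lt_compat; lra).
  unfold Rdiv. nra.
Qed.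

Theorem lemma2 (f : C -> C) (Hf : H2 f) :
  forall eps : R, 0 < eps ->
  exists N : nat, forall (n : nat) (a : C),
    (N < n)%nat -> Cmod a < 1 -> Cmod (hinner f (e_na n a)) < eps.
Proof.
  intros eps Heps.
  destruct (H2_coef_square_summable f Hf) as [c [Hc [B HB]]].
  destruct (nonneg_series_tail_small (fun m => Cmod (c m) ^ 2) B (fun _ => pow2_ge_0 _) HB
              (eps * eps / 8)) as [N HN]; [nra|].
  exists N. intros n a Hn Ha.
  destruct (e_na_series n a Ha) as [e [He [He0 He1]]].
  eapply Rle_lt_trans.
  - apply (Cmod_hinner_le_of_tail f (e_na n a) c e (pred n) B (eps * eps / 8) eps); auto.
    + intros m Hm. apply He0. lia.
    + intros M. apply HN. lia.
  - replace (eps * eps / 8 / (2 * eps)) with (eps / 16) by (field; lra). lra.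
Qed.
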